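(* Algorithm DLE solves the disconnecting leader election problem: for every fair execution starting from a permitted initial configuration, all particles eventually reach a final state, and a configuration is reached in which exactly one particle has status $leader$ and all other particles have status $follower$.
   Context: Geometry. The triangular grid $G$ has as vertices (''points'') the points of the regular triangular lattice in the plane, adjacent iff at unit distance; each point has six incident edges, cyclically ordered clockwise. A shape is a finite set of points (identified with its induced subgraph). For a connected shape $S$: the unbounded face is the outer face; a bounded face containing a grid point not in $S$ is a hole, whose grid points are hole points; the area of $S$ is $S$ together with its hole points; $S$ is simply-connected if it has no holes; the outer boundary is the set of points of $S$ on the boundary of the outer face; a boundary point is a point of $S$ adjacent to a point not in $S$. For a boundary point $v$, a local boundary $B$ of $v$ w.r.t. $S$ is a maximal clockwise cyclic interval of consecutive edges at $v$ leading to points not in $S$, with boundary count $c(v,B)=|B|-2$. $v$ is redundant if its neighbors in $S$ induce a connected subgraph; erodable if redundant and on the outer boundary (then it has a single local boundary $B$); SCE (strictly convex and erodable) if erodable and $c(v,B)>0$. Model (amoebot, strong scheduler). Anonymous particles with constant memory each occupy one point (contracted) or two adjacent points (expanded; a head and a tail); no point is occupied twice. Each particle labels the edges at its occupied point by ports $0,\dots,5$; all particles share the same (clockwise) chirality, and a particle knows the port number a neighboring particle uses for their common edge. Particles communicate by reading and writing the memories of neighboring particles. A contracted particle may expand into an adjacent unoccupied point (which becomes its head); an expanded particle may contract into either of its points; handovers between an expanded and a contracted neighbor are allowed. An execution is a sequence of atomic activations of single particles; in an activation a particle reads its neighbors' memories, computes, updates its own and neighbors' memories, and performs at most one movement. A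 particle in a final state does nothing when activated. An execution is fair if each particle is activated infinitely often; a round is a minimal execution fragment in which every particle is activated at least once. A permitted initial configuration $C_0$ has all particles contracted, at least one particle, and the set $S_P(C_0)$ of occupied points connected. Input: each particle knows, for each port $i$, whether the point reached via port $i$ lies in the outer face of $S_P(C_0)$. The system's shape need not remain connected. Disconnecting leader election: each particle has an output $status \in \{undecided, leader, follower\}$; the goal predicate is that exactly one particle is $leader$ and all others are $follower$. An algorithm solves it if in every fair execution all particles reach a final state and a configuration satisfying the predicate is reached. Algorithm DLE. It maintains a set $S_e$ of eligible points, initially the area of $S_P(C_0)$; points are only removed, never added. Each particle $p$ has $status$ (initially $undecided$) and $eligible[0..5]$ (initially $eligible[i]$ true iff the point via port $i$ is not in the outer face of $S_P(C_0)$), referring to points adjacent to $p$'s head. On activation: (a) if $p$ is expanded, it contracts into its head; (b) else if $p$ and all its neighbors have status $\ne undecided$, $p$ terminates (enters a final state); (c) else if $p.status=undecided$ ($p$ contracted at point $v$): if by its $eligible$ array no neighbor of $v$ is in $S_e$, it sets $status:=leader$; else if $v$ is SCE w.r.t. $S_e$, then $v$ is removed from $S_e$ and every neighboring particle whose head is adjacent to $v$ sets its $eligible$ entry for $v$ to false; then, if $v$ has an adjacent point $u\in S_e$ not occupied by any particle, $p$ sets its $eligible$ entries to true except the one for the port from $u$ back to $v$ (set false) and expands into $u$; otherwise $p$ sets $status:=follower$. In all other cases $p$ does nothing. *)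

From mathcomp Require Import all_boot ssralg ssrnum ssrint.
Set Implicit Arguments. Unset Strict Implicit. Unset Printing Implicit Defensive.

(* Points of the triangular lattice in axial coordinates (a,b) |-> a*e1 + b*e2
   with e1 = (1,0), e2 = (1/2, sqrt 3 / 2). *)
Definition point := (int * int)%type.

(* The six unit directions, in clockwise order starting from e1:
   0deg, -60deg, -120deg, 180deg, 120deg, 60deg. Direction i+3 is opposite to i. *)
Definition dirs : seq point :=
  [:: (Posz 1, Posz 0); (Posz 1, Negz 0); (Posz 0, Negz 0);
      (Negz 0, Posz 0); (Negz 0, Posz 1); (Posz 0, Posz 1)].
Definition dir (i : nat) : point := nth (Posz 0, Posz 0) dirs (i %% 6).

Definition nb (v : point) (i : nat) : point := ((v.1 + (dir i).1)%R, (v.2 + (dir i).2)%R).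

Definition adj (v w : point) : Prop := exists i : nat, w = nb v i.

Inductive reach (A : point -> Prop) : point -> point -> Prop :=
| reach_refl x : A x -> reach A x x
| reach_step x y z : A x -> adj x y -> reach A y z -> reach A x z.

Definition connected_pts (A : point -> Prop) : Prop :=
  forall a b, A a -> A b -> reach A a b.

Definition pnorm (r : point) : nat := (absz r.1 + absz r.2)%N.

(* q lies in the outer (unbounded) face of the finite shape S: q is not in S and
   q is joined, through grid points not in S, to points arbitrarily far away. *)
Definition outer (S : point -> Prop) (q : point) : Prop :=
  forall N : nat, exists r, reach (fun x => ~ S x) q r /\ (N <= pnorm r)%N.

(* area = S together with its hole points = points not in the outer face *)
Definition area (S : point -> Prop) (q : point) : Prop := ~ outer S q.

Definition boundary_point (S : point -> Prop) (v : point) : Prop :=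
  S v /\ exists i, ~ S (nb v i).

Definition outer_boundary (S : point -> Prop) (v : point) : Prop :=
  S v /\ exists i, outer S (nb v i).

Definition redundant (S : point -> Prop) (v : point) : Prop :=
  connected_pts (fun w => S w /\ adj v w).

(* B = the clockwise cyclic interval of edges i, i+1, ..., i+k-1 at v,
   all leading to points not in S, and maximal. |B| = k. *)
Definition local_boundary (S : point -> Prop) (v : point) (i k : nat) : Prop :=
  [/\ (1 <= k <= 6)%N,
      (forall j, (j < k)%N -> ~ S (nb v (i + j)))
    & (k = 6 \/ (S (nb v (i + k)) /\ S (nb v (i + 5))))].

Definition erodable (S : point -> Prop) (v : point) : Prop :=
  [/\ boundary_point S v, redundant S v & outer_boundary S v].

(* strictly convex and erodable: c(v,B) = |B| - 2 > 0 *)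
Definition SCE (S : point -> Prop) (v : point) : Prop :=
  erodable S v /\ exists i k, local_boundary S v i k /\ (0 < Posz k - Posz 2)%R.

Inductive status := Undecided | Leader | Follower.

(* A configuration: each particle occupies its tail and head (contracted iff
   equal); its memory holds status, the eligible array (indexed by the six
   directions at its head; ports are a fixed rotation of directions by shared
   chirality), and a flag for final state. cSe is the set S_e of eligible points. *)
Record config (P : Type) := Config {
  ctail : P -> point;
  chead : P -> point;
  cstatus : P -> status;
  celig : P -> 'I_6 -> Prop;
  cfinal : P -> bool;
  cSe : point -> Prop }.

Section Step.
Variable P : finType.

Definition upd T (f : P -> T) (x : P) (y : T) : P -> T :=
  fun z => if z == x then y else f z.

Definition occupied (C : config P) (u : point) : Prop :=
  exists q, chead C q = u \/ ctail C q = u.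

Definition occ (C : config P) (p : P) (x : point) : Prop :=
  chead C p = x \/ ctail C p = x.

Definition nbr (C : config P) (p q : P) : Prop :=
  q <> p /\ exists x y, [/\ occ C p x, occ C q y & adj x y].

Definition term_cond (C : config P) (p : P) : Prop :=
  cstatus C p <> Undecided /\ forall q, nbr C p q -> cstatus C q <> Undecided.

(* outcome of the erosion branch, p contracted at v, v SCE w.r.t. S_e *)
Definition erode_result (C : config P) (p : P) (v : point) (C' : config P) : Prop :=
  let Se' := fun x => cSe C x /\ x <> v in
  let E' := fun q (i : 'I_6) => celig C q i /\ nb (chead C q) i <> v in
  (exists i : 'I_6,
     let u := nb v i in
     [/\ Se' u, ~ occupied C u &
      C' = Config (ctail C) (upd (chead C) p u) (cstatus C)
                  (upd E' p (fun j : 'I_6 => (j : nat) <> ((i + 3) %% 6)%N))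
                  (cfinal C) Se'])
  \/
  ((forall i : 'I_6, ~ (Se' (nb v i) /\ ~ occupied C (nb v i))) /\
   C' = Config (ctail C) (chead C) (upd (cstatus C) p Follower) E' (cfinal C) Se').

(* One atomic activation of particle p under Algorithm DLE. The choice of the
   free eligible point u is left nondeterministic. *)
Definition dle_step (C : config P) (p : P) (C' : config P) : Prop :=
  (cfinal C p /\ C' = C)
  \/ (~~ cfinal C p /\ chead C p <> ctail C p /\
      C' = Config (upd (ctail C) p (chead C p)) (chead C) (cstatus C) (celig C)
                  (cfinal C) (cSe C))
  \/ (~~ cfinal C p /\ chead C p = ctail C p /\
      ( (term_cond C p /\
          C' = Config (ctail C) (chead C) (cstatus C) (celig C)
                      (upd (cfinal C) p true) (cSe C))
      \/ (~ term_cond C p /\ cstatus C p = Undecided /\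
          ( ((forall i, ~ celig C p i) /\
              C' = Config (ctail C) (chead C) (upd (cstatus C) p Leader) (celig C)
                          (cfinal C) (cSe C))
          \/ ((exists i, celig C p i) /\ SCE (cSe C) (chead C p) /\
              erode_result C p (chead C p) C')
          \/ ((exists i, celig C p i) /\ ~ SCE (cSe C) (chead C p) /\ C' = C)))
      \/ (~ term_cond C p /\ cstatus C p <> Undecided /\ C' = C))).

Definition shape_of (pos : P -> point) : point -> Prop := fun x => exists p, pos p = x.

Definition permitted (pos : P -> point) : Prop :=
  [/\ (0 < #|P|)%N, injective pos & connected_pts (shape_of pos)].

(* initial memory of DLE, computed from the input (outer-face information) *)
Definition init_config (pos : P -> point) : config P :=
  Config pos pos (fun _ => Undecided)
         (fun p (i : 'I_6) => ~ outer (shape_of pos) (nb (pos p) i))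
         (fun _ => false) (area (shape_of pos)).

Definition fair (a : nat -> P) : Prop := forall p n, exists t, (n <= t)%N /\ a t = p.

Definition execution (pos : P -> point) (C : nat -> config P) (a : nat -> P) : Prop :=
  C 0 = init_config pos /\ forall t, dle_step (C t) (a t) (C t.+1).

End Step.

From mathcomp Require Import all_boot ssralg ssrnum ssrint.
From mathcomp Require Import zify.
From Stdlib Require Import Classical ClassicalEpsilon FunctionalExtensionality PropExtensionality.
Set Implicit Arguments. Unset Strict Implicit. Unset Printing Implicit Defensive.
Import GRing.Theory Num.Theory.

(* An invariant keeps the eligible set S_e a connected, hole-free
   subset of the initial area in which every boundary point carries the head
   of a candidate.  A hole-free shape S with at least two points has an SCE
   point other than any given z: let v be its top-right point; if v is not
   SCE, then nb v 1 and nb v 3 lie in S while nb v 2 does not, and a parity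
   (Jordan curve) argument on a cycle through v shows that nb v 1 and nb v 3 lie
   in different components of S minus v; one of these components, plus v, is
   smaller than S and avoids z, and induction applies (if v = z, reflect S).
   So while there is no leader, some candidate sits at an SCE point (or alone),
   and fairness makes S_e shrink; as S_e is finite a leader is elected, all
   other particles are then followers, and every particle terminates. *)

Local Open Scope ring_scope.

Lemma mod6_cases (i : nat) : (i %% 6 = 0 \/ i %% 6 = 1 \/ i %% 6 = 2 \/ i %% 6 = 3 \/
   i %% 6 = 4 \/ i %% 6 = 5)%N.
Proof.
have : (i %% 6 < 6)%N by rewrite ltn_mod.
case: (i %% 6)%N => [|[|[|[|[|[|k]]]]]] //= _; tauto.
Qed.

Lemma nb_mod v i : nb v (i %% 6) = nb v i.
Proof. by rewrite /nb /dir modn_mod. Qed.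

Lemma nbE v i : nb v i =
  match (i %% 6)%N with
  | 0 => (v.1 + 1, v.2)
  | 1 => (v.1 + 1, v.2 - 1)
  | 2 => (v.1, v.2 - 1)
  | 3 => (v.1 - 1, v.2)
  | 4 => (v.1 - 1, v.2 + 1)
  | _ => (v.1, v.2 + 1) end.
Proof.
rewrite -nb_mod; case: (mod6_cases i) => [->|[->|[->|[->|[->|->]]]]];
 rewrite /nb /dir /=; case: v => a b /=; congr pair; lia.
Qed.

Lemma nb0 v : nb v 0 = (v.1 + 1, v.2). Proof. by rewrite nbE. Qed.
Lemma nb1 v : nb v 1 = (v.1 + 1, v.2 - 1). Proof. by rewrite nbE. Qed.
Lemma nb2 v : nb v 2 = (v.1, v.2 - 1). Proof. by rewrite nbE. Qed.
Lemma nb3 v : nb v 3 = (v.1 - 1, v.2). Proof. by rewrite nbE. Qed.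
Lemma nb4 v : nb v 4 = (v.1 - 1, v.2 + 1). Proof. by rewrite nbE. Qed.
Lemma nb5 v : nb v 5 = (v.1, v.2 + 1). Proof. by rewrite nbE. Qed.

Lemma pointP (x y : point) : x.1 = y.1 -> x.2 = y.2 -> x = y.
Proof. by case: x y => [a b] [c d] /= -> ->. Qed.

Ltac point_eq := apply: pointP; rewrite ?nb0 ?nb1 ?nb2 ?nb3 ?nb4 ?nb5 /=; lia.

Lemma nb_opp v i : nb (nb v i) (i + 3) = v.
Proof.
rewrite (nbE v) (nbE _ (i + 3)) -modnDml.
by case: (mod6_cases i) => [->|[->|[->|[->|[->|->]]]]] /=; case: v => a b /=; congr pair; lia.
Qed.

Lemma nb_opp_eq x j v : nb x j = v -> x = nb v (j + 3).
Proof. by move=> <-; rewrite nb_opp. Qed.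

Lemma nb_turn_cw v a : nb (nb v a) (a + 2) = nb v (a + 1).
Proof.
rewrite (nbE (nb v a)) (nbE v a) (nbE v (a + 1)) -modnDml -(modnDml a 1).
by case: (mod6_cases a) => [->|[->|[->|[->|[->|->]]]]] /=; case: v => x y /=; point_eq.
Qed.

Lemma nb_turn_ccw v a : nb (nb v a) (a + 4) = nb v (a + 5).
Proof.
rewrite (nbE (nb v a)) (nbE v a) (nbE v (a + 5)) -modnDml -(modnDml a 5).
by case: (mod6_cases a) => [->|[->|[->|[->|[->|->]]]]] /=; case: v => x y /=; point_eq.
Qed.

Lemma adj_nb v i : adj v (nb v i).
Proof. by exists i. Qed.

Lemma adj_sym x y : adj x y -> adj y x.
Proof. by case=> i ->; exists (i + 3)%N; rewrite nb_opp. Qed.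

Lemma adj_irr v : ~ adj v v.
Proof.
case=> i; rewrite nbE; case: (mod6_cases i) => [->|[->|[->|[->|[->|->]]]]] /=;
 case: v => a b /= [] *; lia.
Qed.

Lemma adj_neq v w : adj v w -> w <> v.
Proof. by move=> H E; apply: (@adj_irr v); rewrite -{2}E. Qed.

Lemma nb_neq v i : nb v i <> v.
Proof. exact/adj_neq/adj_nb. Qed.

Lemma nb_inj v i j : nb v i = nb v j -> (i %% 6 = j %% 6)%N.
Proof.
rewrite (nbE v i) (nbE v j).
case: (mod6_cases i) => [->|[->|[->|[->|[->|->]]]]];
case: (mod6_cases j) => [->|[->|[->|[->|[->|->]]]]] //=; case: v => a b /= [] *; lia.
Qed.

Lemma nb_ord v i : exists j : 'I_6, nb v i = nb v j.
Proof. by exists (Ordinal (ltn_mod i 6)); rewrite /= nb_mod. Qed.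

Definition adjb (x y : point) : bool := has (fun i => y == nb x i) (iota 0 6).

Lemma adjP x y : reflect (adj x y) (adjb x y).
Proof.
apply: (iffP hasP); first by case=> i _ /eqP ->; exists i.
case=> i ->; exists (i %% 6)%N; last by rewrite nb_mod.
by rewrite mem_iota add0n ltn_mod.
Qed.

Section Reach.
Implicit Types (A B S : point -> Prop).

Lemma reach_in_l A x y : reach A x y -> A x.
Proof. by case. Qed.

Lemma reach_in_r A x y : reach A x y -> A y.
Proof. by elim. Qed.

Lemma reach_trans A x y z : reach A x y -> reach A y z -> reach A x z.
Proof. by elim=> [//|x1 y1 z1 Ax Axy _ IH] H; apply: reach_step Ax Axy (IH H). Qed.

Lemma reach_rcons A x y z : reach A x y -> adj y z -> A z -> reach A x z.
Proof.
move=> H Hyz Az; apply: reach_trans (H) _.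
exact: reach_step (reach_in_r H) Hyz (reach_refl Az).
Qed.

Lemma reach_sym A x y : reach A x y -> reach A y x.
Proof.
elim=> [x0 Ax|x1 y1 z1 Ax Axy Hr IH]; first exact: reach_refl.
exact: reach_rcons IH (adj_sym Axy) Ax.
Qed.

Lemma reach_sub A B x y : (forall z, A z -> B z) -> reach A x y -> reach B x y.
Proof.
move=> AB; elim=> [x0 Ax|x1 y1 z1 Ax Axy _ IH]; first exact/reach_refl/AB.
exact: reach_step (AB _ Ax) Axy IH.
Qed.

Lemma reach_adj A x y : adj x y -> A x -> A y -> reach A x y.
Proof. by move=> Hxy Ax Ay; apply: reach_step Ax Hxy (reach_refl Ay). Qed.

Lemma reach_first A a b : reach A a b -> b = a \/ exists y, [/\ adj a y, A y & reach A y b].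
Proof. by case=> [//|x y z _ Hxy Hyz]; [left|right; exists y; split=> //; apply: reach_in_l Hyz]. Qed.

Lemma reach_within A x y : reach A x y -> reach (fun z => A z /\ reach A x z) x y.
Proof.
suff gen : forall a, reach A x y -> reach A a x -> reach (fun z => A z /\ reach A a z) x y.
  by move=> H; apply: gen H (reach_refl (reach_in_l H)).
move=> a; elim=> [x0 Ax|x1 y1 z1 Ax Axy Hr IH] Hax; first exact: reach_refl.
apply: (reach_step (conj Ax Hax) Axy (IH _)).
exact: reach_rcons Hax Axy (reach_in_l Hr).
Qed.

Lemma reach_path A x y : reach A x y ->
  exists s, [/\ path adjb x s, last x s = y & forall z, z \in x :: s -> A z].
Proof.
elim=> [x0 Ax|x1 y1 z1 Ax Axy _ [s [Hp Hl Hin]]].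
  by exists [::]; split=> // z; rewrite inE => /eqP->.
exists (y1 :: s); split=> //=; first by rewrite Hp andbT; apply/adjP.
by move=> z; rewrite in_cons => /orP[/eqP->//|]; apply: Hin.
Qed.

Lemma connected_ext A B : (forall z, A z <-> B z) -> connected_pts A -> connected_pts B.
Proof. by move=> AB CA a b /AB Aa /AB Ab; apply: reach_sub (CA _ _ Aa Ab) => z /AB. Qed.

Lemma outer_notin S x : outer S x -> ~ S x.
Proof. by case/(_ 0%N) => r [H _]; apply: (reach_in_l H). Qed.

Lemma outer_sub S S' x : (forall z, S' z -> S z) -> outer S x -> outer S' x.
Proof.
move=> H O N; case: (O N) => r [Hr HN]; exists r; split=> //.
by apply: reach_sub Hr => z nS /H.
Qed.

Lemma outer_reach S x y : reach (fun z => ~ S z) x y -> outer S y -> outer S x.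
Proof.
move=> Hxy O N; case: (O N) => r [Hr HN]; exists r; split=> //.
exact: reach_trans Hxy Hr.
Qed.

Lemma outer_adj S x y : adj x y -> ~ S x -> outer S y -> outer S x.
Proof. by move=> Hxy nSx O; apply: (outer_reach _ O); apply: reach_adj (outer_notin O). Qed.

End Reach.

Definition ray (v : point) (i k : nat) : point := iter k (fun y => nb y i) v.

Lemma reach_ray A v i k : (forall j, (j <= k)%N -> A (ray v i j)) -> reach A v (ray v i k).
Proof.
elim: k => [|k IH] H; first exact: reach_refl (H 0%N isT).
apply: reach_rcons (IH _) (adj_nb _ _) (H _ (leqnn _)).
by move=> j Hj; apply: H; rewrite (leq_trans Hj).
Qed.

Lemma ray5 v k : ray v 5 k = (v.1, v.2 + k%:Z).
Proof.
elim: k => [|k IH] /=; first by case: v => a b /=; congr pair; lia.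
by rewrite IH nb5 /=; congr pair; lia.
Qed.

Lemma ray2 v k : ray v 2 k = (v.1, v.2 - k%:Z).
Proof.
elim: k => [|k IH] /=; first by case: v => a b /=; congr pair; lia.
by rewrite IH nb2 /=; congr pair; lia.
Qed.

Lemma ray0 v k : ray v 0 k = (v.1 + k%:Z, v.2).
Proof.
elim: k => [|k IH] /=; first by case: v => a b /=; congr pair; lia.
by rewrite IH nb0 /=; congr pair; lia.
Qed.

Lemma ray3 v k : ray v 3 k = (v.1 - k%:Z, v.2).
Proof.
elim: k => [|k IH] /=; first by case: v => a b /=; congr pair; lia.
by rewrite IH nb3 /=; congr pair; lia.
Qed.

Lemma outer_ray S x i : (i == 0 \/ i == 2 \/ i == 3 \/ i == 5)%N ->
  (forall k, ~ S (ray x i k)) -> outer S x.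
Proof.
move=> Hi H N; exists (ray x i (N + pnorm x)); split; first by apply: reach_ray => j _; apply: H.
rewrite /pnorm; case: x {H} => a b.
by case: Hi => [/eqP->|[/eqP->|[/eqP->|/eqP->]]]; rewrite ?ray0 ?ray2 ?ray3 ?ray5 /=; lia.
Qed.

(** * Crossing parity of closed paths *)

(* [crosses q u w]: the edge {u, w} joins row [q.2] to row [q.2 - 1] and its
   endpoint on row [q.2] lies strictly right of [q]; these are the edges met
   by a horizontal half-line leaving [q] to the right just below its row. *)
Definition crosses (q u w : point) : bool :=
  ((u.2 == q.2) && (w.2 == q.2 - 1) && (q.1 < u.1)) ||
  ((w.2 == q.2) && (u.2 == q.2 - 1) && (q.1 < w.1)).

Definition crossings (q x0 : point) (s : seq point) : nat :=
  count (fun e => crosses q e.1 e.2) (zip (x0 :: s) s).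

Definition right_of (q x : point) : bool := (x.2 == q.2) && (q.1 < x.1).

Definition same_edge (u w a b : point) : bool :=
  ((u.1 == a.1) && (u.2 == a.2) && (w.1 == b.1) && (w.2 == b.2)) ||
  ((u.1 == b.1) && (u.2 == b.2) && (w.1 == a.1) && (w.2 == a.2)).

Lemma same_edgeE u w a b : same_edge u w a b = ((u == a) && (w == b)) || ((u == b) && (w == a)).
Proof.
case: u w a b => [u1 u2] [w1 w2] [a1 a2] [b1 b2].
by rewrite /same_edge /= !xpair_eqE !andbA.
Qed.

Lemma same_edge_ends u w a b : same_edge u w a b -> ((u == a) || (w == a)) && ((u == b) || (w == b)).
Proof. by rewrite same_edgeE => /orP[]/andP[/eqP-> /eqP->]; rewrite !eqxx ?orbT. Qed.

(* Moving the base point [q] to a neighbour [q'] changes the crossing status of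
   an edge by the telescoping term [R u (+) R w] (with [R = right_of q] or
   [R = false]) except on the few edges listed by the defect. *)
Definition cross_defect5 q u w := same_edge u w q (nb q 0) (+) same_edge u w (nb q 0) (nb q 5).
Definition cross_defect4 q u w := same_edge u w q (nb q 0) (+) same_edge u w q (nb q 5).
Definition cross_defect0 q u w :=
  ((u.1 == (nb q 0).1) && (u.2 == (nb q 0).2) && (w.2 == q.2 - 1)) ||
  ((w.1 == (nb q 0).1) && (w.2 == (nb q 0).2) && (u.2 == q.2 - 1)).

Ltac case_int_atoms :=
  repeat match goal with
  | |- context [(?x == ?y :> int)] =>
      let H := fresh "H" in case H: (x == y); move/eqP: H => H; try (exfalso; lia)
  | |- context [(?x < ?y :> int)] =>
      let H := fresh "H" in case H: (x < y); move/idP: H => H; try (exfalso; lia)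
  end.

Lemma crosses_nb5 (q u : point) (i : nat) :
  crosses q u (nb u i) (+) crosses (nb q 5) u (nb u i) (+) (right_of q u (+) right_of q (nb u i)) =
  cross_defect5 q u (nb u i).
Proof.
rewrite -nb_mod; have : (i %% 6 < 6)%N by rewrite ltn_mod.
case: u => a b; case: q => c d.
case: (i %% 6)%N => [|[|[|[|[|[|j]]]]]] // _;
rewrite /cross_defect5 /right_of /crosses /same_edge /nb /dir /= ?addr0; case_int_atoms; done.
Qed.

Lemma crosses_nb4 (q u : point) (i : nat) :
  crosses q u (nb u i) (+) crosses (nb q 4) u (nb u i) (+) (right_of q u (+) right_of q (nb u i)) =
  cross_defect4 q u (nb u i).
Proof.
rewrite -nb_mod; have : (i %% 6 < 6)%N by rewrite ltn_mod.
case: u => a b; case: q => c d.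
case: (i %% 6)%N => [|[|[|[|[|[|j]]]]]] // _;
rewrite /cross_defect4 /right_of /crosses /same_edge /nb /dir /= ?addr0; case_int_atoms; done.
Qed.

Lemma crosses_nb0 (q u : point) (i : nat) :
  crosses q u (nb u i) (+) crosses (nb q 0) u (nb u i) (+) (false (+) false) =
  cross_defect0 q u (nb u i).
Proof.
rewrite -nb_mod; have : (i %% 6 < 6)%N by rewrite ltn_mod.
case: u => a b; case: q => c d.
case: (i %% 6)%N => [|[|[|[|[|[|j]]]]]] // _;
rewrite /cross_defect0 /crosses /nb /dir /= ?addr0; case_int_atoms; done.
Qed.

Lemma crosses_left (r u : point) (i : nat) : r.1 < u.1 -> r.1 < (nb u i).1 ->
  crosses r u (nb u i) = ((r.2 - 1 < u.2) (+) (r.2 - 1 < (nb u i).2)).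
Proof.
rewrite -nb_mod; have : (i %% 6 < 6)%N by rewrite ltn_mod.
case: u => a b; case: r => c d.
case: (i %% 6)%N => [|[|[|[|[|[|j]]]]]] // _;
rewrite /crosses /nb /dir /= ?addr0 => h1 h2; case_int_atoms; done.
Qed.

Lemma crosses_below (q u w : point) : u.2 <= q.2 - 1 -> w.2 <= q.2 - 1 -> crosses q u w = false.
Proof.
case: q u w => [a b] [c d] [e f] /= h1 h2.
by apply/negbTE; rewrite /crosses /=; apply/negP => /orP[] /andP[/andP[/eqP g1 /eqP g2] g3]; lia.
Qed.

Definition inbox (M : int) (v : point) : Prop := -M <= v.1 /\ v.1 <= M /\ -M <= v.2 /\ v.2 <= M.

Lemma crosses_outside (r u w : point) M : inbox M u -> inbox M w ->
  (M < r.2 \/ r.2 < -M \/ M < r.1) -> crosses r u w = false.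
Proof.
case: u w r => [a b] [c d] [e f]; rewrite /inbox /= => h1 h2 h3.
by apply/negbTE; rewrite /crosses /=; apply/negP => /orP[] /andP[/andP[/eqP g1 /eqP g2] g3]; lia.
Qed.

Lemma odd_count_addb (T : Type) (f g : T -> bool) (s : seq T) :
  odd (count (fun x => f x (+) g x) s) = odd (count f s) (+) odd (count g s).
Proof.
elim: s => //= x s IH; rewrite !oddD IH.
by case: (f x); case: (g x); case: (odd (count f s)); case: (odd (count g s)).
Qed.

Lemma odd_count_telescope (R : point -> bool) (x0 : point) (s : seq point) :
  odd (count (fun e => R e.1 (+) R e.2) (zip (x0 :: s) s)) = R x0 (+) R (last x0 s).
Proof.
elim: s x0 => [|y s IH] x0 /=; first by rewrite addbb.
by rewrite oddD IH /=; case: (R x0); case: (R y); case: (R (last y s)).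
Qed.

Lemma mem_zip_cons (x0 : point) s e : e \in zip (x0 :: s) s -> e.1 \in x0 :: s /\ e.2 \in x0 :: s.
Proof.
suff gen : forall s t, e \in zip s t -> e.1 \in s /\ e.2 \in t.
  by case/gen => h1 h2; split; rewrite // in_cons h2 orbT.
elim=> [|x s' IH] [|y t] //=; rewrite in_cons => /orP[/eqP->|/IH[h1 h2]].
  by rewrite !mem_head.
by rewrite !in_cons h1 h2 !orbT.
Qed.

Lemma path_adjb_edge (x0 : point) s : path adjb x0 s ->
  forall e, e \in zip (x0 :: s) s -> exists i, e.2 = nb e.1 i.
Proof.
elim: s x0 => [|y s IH] x0 //= /andP[/adjP [i Hi] Hp] e; rewrite in_cons => /orP[/eqP->|H].
  by exists i.
exact: IH Hp e H.
Qed.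

Lemma count_zip_avoid (F : point -> point -> bool) (bad : point -> bool) x0 s :
  (forall u w, F u w -> bad u || bad w) ->
  (forall z, z \in x0 :: s -> ~~ bad z) ->
  count (fun e => F e.1 e.2) (zip (x0 :: s) s) = 0%N.
Proof.
move=> HF Hb; apply/eqP; rewrite -leqn0 leqNgt -has_count; apply/hasP => -[e He /HF].
case/mem_zip_cons: He => h1 h2.
by case/orP => Hbad; [move: (Hb _ h1)|move: (Hb _ h2)]; rewrite Hbad.
Qed.

Lemma odd_crossings_shift (q q' : point) (F : point -> point -> bool) (R : point -> bool) x0 s :
  path adjb x0 s ->
  (forall u i, crosses q u (nb u i) (+) crosses q' u (nb u i) (+) (R u (+) R (nb u i)) = F u (nb u i)) ->
  odd (crossings q x0 s) (+) odd (crossings q' x0 s) =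
  odd (count (fun e => F e.1 e.2) (zip (x0 :: s) s)) (+) (R x0 (+) R (last x0 s)).
Proof.
move=> Hp HF.
rewrite (@eq_in_count _ _ (fun e => crosses q e.1 e.2 (+) crosses q' e.1 e.2 (+) (R e.1 (+) R e.2))); last first.
  by move=> e /(path_adjb_edge Hp) [i ->]; rewrite HF.
rewrite odd_count_addb odd_count_addb odd_count_telescope /crossings.
by case: (odd _); case: (odd _); case: (R x0 (+) R (last x0 s)).
Qed.

Lemma odd_crossings_shift_closed (q q' : point) (F : point -> point -> bool) (R : point -> bool) x0 s :
  path adjb x0 s -> last x0 s = x0 ->
  (forall u i, crosses q u (nb u i) (+) crosses q' u (nb u i) (+) (R u (+) R (nb u i)) = F u (nb u i)) ->
  odd (crossings q x0 s) (+) odd (crossings q' x0 s) =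
  odd (count (fun e => F e.1 e.2) (zip (x0 :: s) s)).
Proof. by move=> Hp Hl HF; rewrite (odd_crossings_shift Hp HF) Hl addbb addbF. Qed.

Lemma addb_orb (a b : bool) : a (+) b -> a || b.
Proof. by case: a; case: b. Qed.

Section ClosedPath.
Variables (x0 : point) (s : seq point).
Hypotheses (Hpath : path adjb x0 s) (Hclosed : last x0 s = x0).

Lemma odd_crossings_nb045 q i : (i %% 6 = 0 \/ i %% 6 = 4 \/ i %% 6 = 5)%N ->
  q \notin x0 :: s -> nb q i \notin x0 :: s ->
  odd (crossings q x0 s) = odd (crossings (nb q i) x0 s).
Proof.
rewrite -(nb_mod q i) => Hi Hq Hq'.
suff : odd (crossings q x0 s) (+) odd (crossings (nb q (i %% 6)) x0 s) = false.
  by case: odd; case: odd.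
have avoid (q' : point) (F : point -> point -> bool) : q' \notin x0 :: s ->
    (forall u w, F u w -> [|| u == q, w == q, u == q' | w == q']) ->
    count (fun e => F e.1 e.2) (zip (x0 :: s) s) = 0%N.
  move=> Hq'' HF; apply: (@count_zip_avoid _ (fun x => (x == q) || (x == q'))).
    by move=> u w /HF; case/or4P=> ->; rewrite ?orbT.
  by move=> z Hz; apply/negP => /orP[]/eqP Ez; [move: Hq|move: Hq'']; rewrite -Ez Hz.
case: Hi => [Ei|[Ei|Ei]]; rewrite Ei in Hq' *.
- rewrite (odd_crossings_shift Hpath (crosses_nb0 q)) (avoid (nb q 0)) //.
  by move=> u w /orP[]/andP[/andP[h1 h2] _]; rewrite (pointP (eqP h1) (eqP h2)) eqxx !orbT.
- rewrite (odd_crossings_shift_closed Hpath Hclosed (crosses_nb4 q)) (avoid (nb q 4)) //.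
  by move=> u w /addb_orb/orP[] /same_edge_ends /andP[/orP[]/eqP-> _]; rewrite eqxx ?orbT.
- rewrite (odd_crossings_shift_closed Hpath Hclosed (crosses_nb5 q)) (avoid (nb q 5)) //.
  move=> u w /addb_orb/orP[] /same_edge_ends /andP[]; first by case/orP=> /eqP-> _; rewrite eqxx ?orbT.
  by move=> _ /orP[]/eqP->; rewrite eqxx ?orbT.
Qed.

(* Directions 1, 2, 3 reduce to 4, 5, 0 by swapping the two points. *)
Lemma odd_crossings_nb q i : q \notin x0 :: s -> nb q i \notin x0 :: s ->
  odd (crossings q x0 s) = odd (crossings (nb q i) x0 s).
Proof.
move=> Hq Hq'; case: (mod6_cases i) => [Hi|[Hi|[Hi|[Hi|[Hi|Hi]]]]].
1,5,6: by apply: odd_crossings_nb045 => //; lia.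
all: rewrite -{1}(nb_opp q i); symmetry; apply: odd_crossings_nb045; rewrite ?nb_opp //; lia.
Qed.

Lemma odd_crossings_far (r : point) (M : int) : (forall v, v \in x0 :: s -> inbox M v) ->
  (M < r.2 \/ r.2 < -M \/ M < r.1 \/ r.1 < -M) -> ~~ odd (crossings r x0 s).
Proof.
move=> Hb Hr.
have Hbe e : e \in zip (x0 :: s) s -> inbox M e.1 /\ inbox M e.2.
  by case/mem_zip_cons=> h1 h2; split; apply: Hb.
have [Hr'|Hr'] : (M < r.2 \/ r.2 < -M \/ M < r.1) \/ r.1 < -M by tauto.
  suff -> : crossings r x0 s = 0%N by [].
  apply/eqP; rewrite -leqn0 leqNgt -has_count; apply/hasP => -[e /Hbe [h1 h2]].
  by rewrite (crosses_outside h1 h2 Hr').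
rewrite /crossings (@eq_in_count _ _ (fun e : point * point => (r.2 - 1 < e.1.2) (+) (r.2 - 1 < e.2.2))).
  by rewrite (odd_count_telescope (fun x : point => r.2 - 1 < x.2)) Hclosed addbb.
move=> [u w] He; have [[/= h1 _] [h2 _]] := Hbe _ He.
by case: (path_adjb_edge Hpath He) => /= i Ei; rewrite /= Ei in h2 *; apply: crosses_left; lia.
Qed.

Lemma odd_crossings_outer (S : point -> Prop) q M :
  (forall v, v \in x0 :: s -> S v) -> (forall v, S v -> inbox M v) ->
  outer S q -> ~~ odd (crossings q x0 s).
Proof.
move=> HS Hb O.
case: (O (absz M * 2 + 2)%N) => r [Hr Hn].
have Hfar : ~~ odd (crossings r x0 s).
  apply: (odd_crossings_far (M := M)); first by move=> v /HS /Hb.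
  by rewrite /pnorm in Hn; lia.
suff -> : odd (crossings q x0 s) = odd (crossings r x0 s) by [].
elim: Hr {Hfar O} => [//|x y z nSx [i ->] Hyz <-].
by apply: odd_crossings_nb; apply/negP => /HS; [|apply: (reach_in_l Hyz)].
Qed.

End ClosedPath.

(** * Strictly convex erodable points of hole-free shapes *)

Definition remove (S : point -> Prop) (v : point) : point -> Prop := fun x => S x /\ x <> v.
Definition holefree (S : point -> Prop) : Prop := forall x, ~ S x -> outer S x.
Definition covered (S : point -> Prop) (l : seq point) : Prop := forall x, S x -> x \in l.
Definition nontrivial (S : point -> Prop) : Prop := exists x y, [/\ S x, S y & x <> y].

Definition lex_le (x v : point) : Prop := x.2 < v.2 \/ (x.2 = v.2 /\ x.1 <= v.1).
Definition top_right (S : point -> Prop) (v : point) : Prop := S v /\ forall x, S x -> lex_le x v.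

Lemma lex_le_refl x : lex_le x x.
Proof. by right; split=> //; lia. Qed.

Lemma lex_le_total x y : lex_le x y \/ lex_le y x.
Proof. rewrite /lex_le; case: x y => [a b] [c d] /=; lia. Qed.

Lemma lex_le_trans x y z : lex_le x y -> lex_le y z -> lex_le x z.
Proof. rewrite /lex_le; case: x y z => [a b] [c d] [e f] /=; lia. Qed.

Lemma top_right_exists S l x0 : covered S l -> S x0 -> exists v, top_right S v.
Proof.
move=> Hc Sx0.
suff [v [Sv Hv]] : exists v, S v /\ forall x, S x -> x \in l -> lex_le x v.
  by exists v; split=> // x Sx; apply: Hv (Hc _ Sx).
have : exists x, S x /\ x \in l by exists x0; split=> //; apply: Hc.
elim: l {Hc} => [[x [_]]//|y l IH] [x [Sx Hx]].
have [/IH [v [Sv Hv]]|Hno] := classic (exists x, S x /\ x \in l).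
  have [Sy|nSy] := classic (S y); last first.
    by exists v; split=> // z Sz; rewrite in_cons => /orP[/eqP Ez|]; [rewrite Ez in Sz|apply: Hv].
  have [Hyv|Hvy] := lex_le_total y v.
    by exists v; split=> // z Sz; rewrite in_cons => /orP[/eqP->//|]; apply: Hv.
  exists y; split=> // z Sz; rewrite in_cons => /orP[/eqP->|/(Hv _ Sz) Hzv].
    exact: lex_le_refl.
  exact: lex_le_trans Hzv Hvy.
have Ey : x = y by move: Hx; rewrite in_cons => /orP[/eqP//|Hx]; case: Hno; exists x.
subst x; exists y; split=> // z Sz; rewrite in_cons => /orP[/eqP->|Hz].
  exact: lex_le_refl.
by case: Hno; exists z.
Qed.

Definition coord_bound (l : seq point) : nat := sumn [seq absz x.1 + absz x.2 | x <- l].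

Lemma covered_inbox S l : covered S l -> forall v, S v -> inbox (Posz (coord_bound l)) v.
Proof.
have le_bound x : x \in l -> (absz x.1 + absz x.2 <= coord_bound l)%N.
  elim: l => [|y l IH] //=; rewrite in_cons => /orP[/eqP->|/IH h]; first exact: leq_addr.
  by rewrite (leq_trans h) // leq_addl.
by move=> Hc v /Hc /le_bound; rewrite /inbox; case: v => a b /=; lia.
Qed.

Lemma nb_eqF v i : (v == nb v i) = false.
Proof. by apply/negbTE/eqP => E; apply: (@nb_neq v i); rewrite -E. Qed.

Lemma nb_nb_eqF v i j : (i %% 6 != j %% 6)%N -> (nb v i == nb v j) = false.
Proof. by move=> H; apply/negbTE/eqP => /nb_inj E; rewrite E eqxx in H. Qed.

Lemma zip_rcons (T : Type) (x : T) s y :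
  zip (x :: rcons s y) (rcons s y) = rcons (zip (x :: s) s) (last x s, y).
Proof. by elim: s x => [|z s IH] x //=; rewrite IH. Qed.

Section TopRight.
Variables (S : point -> Prop) (v : point).
Hypothesis Htop : top_right S v.

Lemma top_right_out : [/\ ~ S (nb v 0), ~ S (nb v 4) & ~ S (nb v 5)].
Proof. by case: Htop => Sv H; split=> /H; rewrite /lex_le ?nb0 ?nb4 ?nb5 /=; lia. Qed.

Lemma top_right_nb w : adj v w -> S w -> w = nb v 1 \/ w = nb v 2 \/ w = nb v 3.
Proof.
have [h0 h4 h5] := top_right_out; case=> i ->; rewrite -nb_mod.
by case: (mod6_cases i) => [->|[->|[->|[->|[->|->]]]]] //; tauto.
Qed.

Lemma top_right_redundant : ~ (S (nb v 1) /\ ~ S (nb v 2) /\ S (nb v 3)) -> redundant S v.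
Proof.
move=> Hbad a b [Sa Ha] [Sb Hb].
set N := fun w => S w /\ adj v w.
have Nnb i : S (nb v i) -> N (nb v i) by split; [|apply: adj_nb].
have r12 : S (nb v 1) -> S (nb v 2) -> reach N (nb v 1) (nb v 2).
  by move=> s1 s2; apply: reach_adj (Nnb _ s1) (Nnb _ s2); exists 3%N; point_eq.
have r23 : S (nb v 2) -> S (nb v 3) -> reach N (nb v 2) (nb v 3).
  by move=> s2 s3; apply: reach_adj (Nnb _ s2) (Nnb _ s3); exists 4%N; point_eq.
have r13 : S (nb v 1) -> S (nb v 3) -> reach N (nb v 1) (nb v 3).
  move=> s1 s3; have s2 : S (nb v 2) by apply: NNPP => ns2; apply: Hbad.
  exact: reach_trans (r12 s1 s2) (r23 s2 s3).
case: (top_right_nb Ha Sa) => [Ea|[Ea|Ea]]; case: (top_right_nb Hb Sb) => [Eb|[Eb|Eb]];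
  subst a b; try exact: reach_refl.
- exact: r12.
- exact: r13.
- exact/reach_sym/r12.
- exact: r23.
- exact/reach_sym/r13.
- exact/reach_sym/r23.
Qed.

Ltac nb_normalize :=
  repeat match goal with
  | |- context [nb ?v ?n] =>
      let m := eval vm_compute in (n %% 6)%N in
      lazymatch n with
      | m => fail
      | _ => rewrite -(nb_mod v n) (_ : (n %% 6 = m)%N); last by []
      end
  end.

(* Directions 4, 5, 0 are empty, so the empty directions around [v] contain
   a run of at least three consecutive ones. *)
Lemma top_right_convex : exists i k, local_boundary S v i k /\ (0 < Posz k - Posz 2).
Proof.
have [h0 h4 h5] := top_right_out.
have lb i k : (1 <= k <= 6)%N -> (forall j, (j < k)%N -> ~ S (nb v (i + j))) ->
    (k = 6%N \/ (S (nb v (i + k)) /\ S (nb v (i + 5)))) -> (2 < k)%N ->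
    exists i k, local_boundary S v i k /\ (0 < Posz k - Posz 2).
  by move=> H1 H2 H3 H4; exists i, k; split; [split|rewrite subr_gt0 ltz_nat].
have [s3|s3] := classic (S (nb v 3)).
  have [s1|s1] := classic (S (nb v 1)).
    apply: (lb 4%N 3%N) => //; last by right; nb_normalize.
    by case=> [|[|[|j]]] // _; nb_normalize.
  have [s2|s2] := classic (S (nb v 2)).
    apply: (lb 4%N 4%N) => //; last by right; nb_normalize.
    by case=> [|[|[|[|j]]]] // _; nb_normalize.
  apply: (lb 4%N 5%N) => //; last by right; nb_normalize.
  by case=> [|[|[|[|[|j]]]]] // _; nb_normalize.
have [s1|s1] := classic (S (nb v 1)); have [s2|s2] := classic (S (nb v 2)).
- apply: (lb 3%N 4%N) => //; last by right; nb_normalize.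
  by case=> [|[|[|[|j]]]] // _; nb_normalize.
- apply: (lb 2%N 5%N) => //; last by right; nb_normalize.
  by case=> [|[|[|[|[|j]]]]] // _; nb_normalize.
- apply: (lb 3%N 5%N) => //; last by right; nb_normalize.
  by case=> [|[|[|[|[|j]]]]] // _; nb_normalize.
- apply: (lb 0%N 6%N) => //; last by left.
  by case=> [|[|[|[|[|[|j]]]]]] // _; nb_normalize.
Qed.

Lemma top_right_SCE : holefree S -> ~ (S (nb v 1) /\ ~ S (nb v 2) /\ S (nb v 3)) -> SCE S v.
Proof.
move=> Hf Hbad; have [_ _ h5] := top_right_out.
split; last exact: top_right_convex.
split; [by split; [apply: Htop.1|exists 5%N]|exact: top_right_redundant|].
by split; [apply: Htop.1|exists 5%N; apply: Hf].
Qed.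

Lemma top_right_crossings_even g : path adjb v g -> last v g = v ->
  (forall z, z \in v :: g -> S z) -> odd (crossings v v g) = false.
Proof.
move=> Hp Hl HS; have [h0 _ _] := top_right_out.
have c5 : crossings (nb v 5) v g = 0%N.
  apply: (@count_zip_avoid _ (fun x : point => v.2 < x.2)).
    by move=> u w; apply: contraTT => /norP[hu hw]; rewrite crosses_below // nb5 /= addrK; lia.
  by move=> z /HS /Htop.2 Hz; apply/negP => H; move: Hz; rewrite /lex_le; lia.
have := odd_crossings_shift_closed Hp Hl (crosses_nb5 v).
rewrite c5 (@count_zip_avoid _ (fun x => x == nb v 0)) ?addbF //.
  by move=> u w /addb_orb/orP[] /same_edge_ends /andP[].
by move=> z /HS Sz; apply/eqP => E; apply: h0; rewrite -E.
Qed.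

(* Otherwise the cycle [v, nb v 1, ..., nb v 3, v] would cross the half-line
   of the outer point [nb v 2] an odd number of times. *)
Lemma top_right_separates l : covered S l -> holefree S ->
  S (nb v 1) -> ~ S (nb v 2) -> S (nb v 3) -> ~ reach (remove S v) (nb v 1) (nb v 3).
Proof.
move=> Hc Hf s1 ns2 s3 Hr.
case: (reach_path Hr) => s [Hp Hl Hin].
set g := nb v 1 :: rcons s v.
have Hpg : path adjb v g.
  rewrite /g /= rcons_path Hp Hl /=; apply/andP; split; apply/adjP; first exact: adj_nb.
  by exists 0%N; point_eq.
have Hlg : last v g = v by rewrite /g /= last_rcons.
have HS z : z \in v :: g -> S z.
  rewrite /g !in_cons mem_rcons in_cons => /or4P[/eqP->|/eqP->|/eqP->|Hz];
    [exact: Htop.1|exact: s1|exact: Htop.1|].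
  by case: (Hin z); rewrite // in_cons Hz orbT.
have E0 : nb (nb v 2) 0 = nb v 1 by point_eq.
have E5 : nb (nb v 2) 5 = v by point_eq.
(* Of the two defect edges {nb v 2, nb v 1} and {nb v 1, v}, the cycle uses
   only the second, and only once. *)
have cnt : odd (count (fun e => cross_defect5 (nb v 2) e.1 e.2) (zip (v :: g) g)) = true.
  rewrite /g /= zip_rcons -cats1 count_cat /= Hl.
  rewrite (@count_zip_avoid _ (fun x => (x == nb v 2) || (x == v))); last first.
  - move=> z /Hin [Sz nz]; apply/negP => /orP[/eqP E|/eqP //]; by apply: ns2; rewrite -E.
  - move=> u w; rewrite /cross_defect5 E0 E5 => /addb_orb /orP[] /same_edge_ends /andP[].
      by case/orP => -> _; rewrite ?orbT.
    by move=> _ /orP[] ->; rewrite ?orbT.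
  rewrite /cross_defect5 E0 E5 !same_edgeE !eqxx !nb_eqF /=.
  by rewrite (@nb_nb_eqF v 3 1) // (@nb_nb_eqF v 3 2) // eq_sym nb_eqF.
have := odd_crossings_shift_closed Hpg Hlg (crosses_nb5 (nb v 2)).
rewrite cnt E5 (top_right_crossings_even Hpg Hlg HS) addbF => Hodd.
by have := odd_crossings_outer Hpg Hlg HS (covered_inbox Hc) (Hf _ ns2); rewrite Hodd.
Qed.

End TopRight.

Lemma SCE_sub (S T : point -> Prop) w : (forall x, T x -> S x) -> holefree S ->
  (forall y, adj w y -> S y -> T y) -> SCE T w -> SCE S w.
Proof.
move=> TS Hf Hcl [[[Tw [i nTi]] Hred [_ [j Oj]]] [i' [k [[Hk Hnot Hmax] Hpos]]]].
have Heq n : S (nb w n) <-> T (nb w n) by split; [apply/Hcl/adj_nb|apply: TS].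
split; first split.
- by split; [apply: TS|exists i; move/Heq].
- apply: connected_ext Hred => z; split; case=> h1 h2; split=> //; first exact: TS.
  exact: Hcl.
- by split; [apply: TS|exists j; apply: Hf => /Heq; apply: (outer_notin Oj)].
- exists i', k; split=> //; split=> //; first by move=> n /Hnot; rewrite Heq.
  by case: Hmax => [->|[h1 h2]]; [left|right; rewrite !Heq].
Qed.

Lemma ex_least (Q : nat -> Prop) k : Q k -> exists m, Q m /\ forall j, (j < m)%N -> ~ Q j.
Proof.
elim/ltn_ind: k => k IH Qk.
have [[j [Hj Qj]]|H] := classic (exists j, (j < k)%N /\ Q j); first exact: IH Qj.
by exists k; split=> // j Hj Qj; apply: H; exists j.
Qed.

Definition component_with (S : point -> Prop) (v d : point) : point -> Prop :=
  fun x => x = v \/ reach (remove S v) d x.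

Lemma component_with_sub S v d x : top_right S v -> component_with S v d x -> S x.
Proof. by move=> Htop [->|/reach_in_r []]; [apply: Htop.1|]. Qed.

(* Walking up from a point [x] of [S] outside the component, the column stays
   in [S] minus [v] (the point below [v] is not in [S]), hence outside the
   component, until it leaves [S] into the outer face of [S]. *)
Lemma component_holefree S v d : holefree S -> top_right S v -> ~ S (nb v 2) ->
  holefree (component_with S v d).
Proof.
move=> Hf Htop ns2 x nTx.
have TS := @component_with_sub S v d _ Htop.
have [Sx|nSx] := classic (S x); last by apply: outer_sub (Hf _ nSx) => y /TS.
have [K [nSK HK]] : exists K, ~ S (ray x 5 K) /\ forall j, (j < K)%N -> S (ray x 5 j).
  have top : ~ S (ray x 5 (absz (v.2 - x.2) + 1)) by move/Htop.2; rewrite ray5 /lex_le /=; lia.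
  have [K [nSK HK]] := @ex_least (fun k => ~ S (ray x 5 k)) _ top.
  by exists K; split=> // j /HK /NNPP.
have Hcol j : (j < K)%N -> remove S v (ray x 5 j).
  case: j => [|j] Hj; first by split=> // E; apply: nTx; left.
  split; [exact: HK|move=> /(@nb_opp_eq (ray x 5 j)) E].
  by apply: ns2; rewrite -nb_mod -[(2 %% 6)%N]/((5 + 3) %% 6)%N nb_mod -E; apply/HK/ltnW.
have Hup j : (j <= K)%N -> ~ component_with S v d (ray x 5 j).
  rewrite leq_eqVlt => /orP[/eqP-> /TS //|hj [E|Hr]]; first exact: (Hcol j hj).2.
  apply: nTx; right; apply: reach_trans Hr (reach_sym (reach_ray _)) => i Hi.
  exact/Hcol/(leq_ltn_trans Hi hj).
apply: (@outer_reach _ _ (ray x 5 K)); first exact: reach_ray.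
by apply: outer_sub (Hf _ nSK) => y /TS.
Qed.

Definition SCE_avoiding_below (n : nat) : Prop := forall S l z, (size l < n)%N ->
  covered S l -> holefree S -> nontrivial S -> exists w, SCE S w /\ w <> z.

Lemma size_filter_neq_lt (l : seq point) x : x \in l -> (size [seq y <- l | y != x] < size l)%N.
Proof.
move=> Hx; rewrite size_filter -(count_predC (fun y => y != x) l) -addn1 leq_add2l.
by rewrite lt0n -lt0n -has_count; apply/hasP; exists x => //=; rewrite eqxx.
Qed.

(* The component of [d] in [S] minus [v], together with [v], is covered by
   fewer points than [S], because it misses [d']. *)
Lemma SCE_in_component S l v z d d' : SCE_avoiding_below (size l) ->
  covered S l -> holefree S -> top_right S v -> ~ S (nb v 2) ->
  S d -> adj v d -> S d' -> adj v d' ->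
  ~ reach (remove S v) d d' -> ~ reach (remove S v) d z -> exists w, SCE S w /\ w <> z.
Proof.
move=> IH Hc Hf Htop ns2 Sd avd Sd' avd' nd' nz.
set T := component_with S v d.
have TS := @component_with_sub S v d _ Htop.
have Tv : T v by left.
have Td : T d by right; apply: reach_refl; split=> //; apply: adj_neq.
have Hcov : covered T [seq y <- l | y != d'].
  move=> x Tx; rewrite mem_filter (Hc _ (TS _ Tx)) andbT; apply/eqP => E.
  by case: Tx; rewrite E; [apply: adj_neq|].
have HT2 : nontrivial T by exists v, d; split=> //; apply/nesym/adj_neq.
have [w [Hw wv]] := IH T _ v (size_filter_neq_lt (Hc _ Sd')) Hcov
  (component_holefree (d := d) Hf Htop ns2) HT2.
have rw : reach (remove S v) d w by case: Hw => [[[[]]]] // [].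
exists w; split; last by move=> E; apply: nz; rewrite -E.
apply: SCE_sub Hw => // y awy Sy.
have [->|yv] := classic (y = v); first by left.
by right; apply: reach_rcons rw awy _.
Qed.

Lemma SCE_avoiding_top_right S l v z : SCE_avoiding_below (size l) ->
  covered S l -> holefree S -> top_right S v -> v <> z -> exists w, SCE S w /\ w <> z.
Proof.
move=> IH Hc Hf Htop vz.
have [[s1 [ns2 s3]]|Hconvex] := classic (S (nb v 1) /\ ~ S (nb v 2) /\ S (nb v 3)); last first.
  by exists v; split=> //; apply: top_right_SCE.
have Hsep := top_right_separates Htop Hc Hf s1 ns2 s3.
have [H1|H1] := classic (reach (remove S v) (nb v 1) z).
  apply: (@SCE_in_component S l v z (nb v 3) (nb v 1)) => //; try exact: adj_nb.
    by move/reach_sym.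
  by move=> H; apply/Hsep/(reach_trans H1 (reach_sym H)).
by apply: (@SCE_in_component S l v z (nb v 1) (nb v 3)) => //; exact: adj_nb.
Qed.

Definition negp (x : point) : point := (- x.1, - x.2).

Lemma negpK x : negp (negp x) = x.
Proof. by case: x => a b; rewrite /negp /= !opprK. Qed.

Lemma negp_nb x i : negp (nb x i) = nb (negp x) (i + 3).
Proof.
rewrite (nbE x) (nbE _ (i + 3)) -modnDml.
by case: (mod6_cases i) => [->|[->|[->|[->|[->|->]]]]] /=; case: x => a b; rewrite /negp /=;
  congr pair; lia.
Qed.

Lemma adj_negp x y : adj x y -> adj (negp x) (negp y).
Proof. by case=> i ->; exists (i + 3)%N; rewrite negp_nb. Qed.

Lemma reach_negp A x y : reach A x y -> reach (fun z => A (negp z)) (negp x) (negp y).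
Proof.
elim=> [x0 Ax|x1 y1 z1 Ax Axy _ IH]; first by apply: reach_refl; rewrite negpK.
by apply: reach_step IH; [rewrite negpK|apply: adj_negp].
Qed.

Lemma outer_negp S x : outer S x -> outer (fun z => S (negp z)) (negp x).
Proof.
move=> O N; case: (O N) => r [Hr HN]; exists (negp r); split.
  exact: (@reach_negp (fun z => ~ S z) x r Hr).
by case: r {Hr} HN => a b; rewrite /pnorm /negp /= !abszN.
Qed.

Lemma SCE_negp S w : SCE (fun z => S (negp z)) w -> SCE S (negp w).
Proof.
move=> [[[Tw [i nTi]] Hred [_ [j Oj]]] [i' [k [[Hk Hnot Hmax] Hpos]]]].
have E3 n : (i' + 3 + n = (i' + n) + 3)%N by rewrite addnAC.
split; first split.
- by split=> //; exists (i + 3)%N; rewrite -negp_nb.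
- move=> a b [Sa Ha] [Sb Hb].
  have Ha' : adj w (negp a) by rewrite -(negpK w); apply: adj_negp.
  have Hb' : adj w (negp b) by rewrite -(negpK w); apply: adj_negp.
  have := reach_negp (Hred _ _ (conj (_ : S (negp (negp a))) Ha') (conj (_ : S (negp (negp b))) Hb')).
  rewrite !negpK => /(_ Sa Sb); apply: reach_sub => y [h1 h2]; split; first by rewrite negpK in h1.
  by rewrite -(negpK y); apply: adj_negp.
- split=> //; exists (j + 3)%N; rewrite -negp_nb.
  by apply: outer_sub (outer_negp Oj) => y; rewrite negpK.
- exists (i' + 3)%N, k; split=> //; split=> //; first by move=> n /Hnot; rewrite E3 -negp_nb.
  by case: Hmax => [->|[h1 h2]]; [left|right; rewrite !E3 -!negp_nb].
Qed.

(* If the top-right point of [S] is [z], use the top-right point of the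
   reflected shape, i.e. the bottom-left point of [S]; the two coincide only
   when [S] is a single point. *)
Lemma SCE_avoiding n : SCE_avoiding_below n.
Proof.
elim: n => [|n IHn] S l z Hn Hc Hf [x [y [Sx Sy xy]]]; first by [].
have IH : SCE_avoiding_below (size l).
  by move=> S' l' z' Hl'; apply: IHn; apply: leq_trans Hl' _; rewrite -ltnS.
have [v Htop] := top_right_exists Hc Sx.
have [vz|vz] := classic (v = z); last exact: SCE_avoiding_top_right IH Hc Hf Htop vz.
set S' := fun x => S (negp x).
have Hc' : covered S' (map negp l) by move=> u /Hc Hu; rewrite -(negpK u); apply: map_f.
have Hf' : holefree S' by move=> u /Hf /outer_negp; rewrite negpK.
have Sx' : S' (negp x) by rewrite /S' negpK.
have [v' Htop'] := top_right_exists Hc' Sx'.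
have [vz'|vz'] := classic (v' = negp z).
  have single u : S u -> u = z.
    move=> Su; have := Htop.2 _ Su; have := Htop'.2 (negp u); rewrite /S' negpK vz' => /(_ Su).
    by rewrite -vz /lex_le /negp; case: u {Su} => a b; case: (v) => c d /= h2 h1; apply: pointP => /=; lia.
  by case: xy; rewrite (single _ Sx) (single _ Sy).
have IH' : SCE_avoiding_below (size (map negp l)) by rewrite size_map.
have [w [Hw wz]] := SCE_avoiding_top_right IH' Hc' Hf' Htop' vz'.
by exists (negp w); split; [apply: SCE_negp|move=> E; apply: wz; rewrite -E negpK].
Qed.

Lemma exists_SCE S l : covered S l -> holefree S -> nontrivial S -> exists w, SCE S w.
Proof.
move=> Hc Hf H2.
by have [w [Hw _]] := @SCE_avoiding (size l).+1 S l (0, 0) (ltnSn _) Hc Hf H2; exists w.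
Qed.

(** * The area of the initial shape *)

Definition box_points (M : nat) : seq point :=
  [seq (Posz a - Posz M, Posz b - Posz M) | a <- iota 0 (M.*2.+1), b <- iota 0 (M.*2.+1)].

Lemma mem_box_points M x : inbox (Posz M) x -> x \in box_points M.
Proof.
case: x => a b; rewrite /inbox /= => -[h1 [h2 [h3 h4]]].
have -> : (a, b) = (Posz (absz (a + Posz M)) - Posz M, Posz (absz (b + Posz M)) - Posz M).
  by apply: pointP => /=; lia.
by apply: allpairs_f; rewrite mem_iota; apply/andP; split=> //; lia.
Qed.

Section Area.
Variables (P : finType) (pos : P -> point).
Local Notation S := (shape_of pos).

Definition shape_bound : nat := coord_bound [seq pos p | p <- enum P].

Lemma shape_inbox x : S x -> inbox (Posz shape_bound) x.
Proof. by apply: covered_inbox => y [p <-]; apply: map_f; rewrite mem_enum. Qed.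

Lemma shape_sub_area x : S x -> area S x.
Proof. by move=> Sx /outer_notin. Qed.

Lemma area_inbox x : area S x -> inbox (Posz shape_bound) x.
Proof.
move=> Ax; apply: NNPP => nbox; apply: Ax.
have nS y : ~ inbox (Posz shape_bound) y -> ~ S y by move=> h /shape_inbox.
case: x nbox => a b; rewrite /inbox /= => nbox.
have [h|[h|[h|h]]] : shape_bound%:Z < b \/ b < - shape_bound%:Z \/
                     shape_bound%:Z < a \/ a < - shape_bound%:Z by lia.
- by apply: (@outer_ray _ _ 5%N); [lia|move=> k; apply: nS; rewrite ray5 /inbox /=; lia].
- by apply: (@outer_ray _ _ 2%N); [lia|move=> k; apply: nS; rewrite ray2 /inbox /=; lia].
- by apply: (@outer_ray _ _ 0%N); [lia|move=> k; apply: nS; rewrite ray0 /inbox /=; lia].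
- by apply: (@outer_ray _ _ 3%N); [lia|move=> k; apply: nS; rewrite ray3 /inbox /=; lia].
Qed.

Lemma area_covered : covered (area S) (box_points shape_bound).
Proof. by move=> x /area_inbox; apply: mem_box_points. Qed.

Lemma area_interior x : area S x -> ~ S x -> forall i, area S (nb x i).
Proof. by move=> Ax nSx i O; apply/Ax/(outer_adj (adj_nb x i)). Qed.

(* Going up from a point of the area, one meets the shape before leaving the area. *)
Lemma area_reach_shape x : area S x -> exists y, S y /\ reach (area S) x y.
Proof.
move=> Ax.
have [[k Hk]|H] := classic (exists k, S (ray x 5 k)); last first.
  by case: Ax; apply: (@outer_ray _ _ 5%N) => [|k Sk]; [lia|apply: H; exists k].
have [m [Sm Hm]] := @ex_least (fun k => S (ray x 5 k)) k Hk.
exists (ray x 5 m); split=> //; apply: reach_ray => j; rewrite leq_eqVlt => /orP[/eqP->|Hj].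
  exact: shape_sub_area.
move=> O; apply: Ax; apply: outer_reach O.
by apply: reach_ray => j' Hj'; apply: Hm; rewrite (leq_ltn_trans Hj').
Qed.

Lemma area_connected : connected_pts S -> connected_pts (area S).
Proof.
move=> Hc a b Aa Ab.
have [ya [Sya Ha]] := area_reach_shape Aa; have [yb [Syb Hb]] := area_reach_shape Ab.
apply: reach_trans Ha (reach_trans _ (reach_sym Hb)).
by apply: reach_sub (Hc _ _ Sya Syb) => z /shape_sub_area.
Qed.

Lemma area_holefree : holefree (area S).
Proof.
move=> x /NNPP O N; case: (O N) => r [Hr HN]; exists r; split=> //.
apply: reach_sub (reach_within Hr) => z [nSz Hz]; apply.
exact: outer_reach (reach_sym Hz) O.
Qed.

End Area.

(** * Erosion of a single point *)

Lemma remove_connected (S : point -> Prop) v : connected_pts S -> redundant S v ->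
  connected_pts (remove S v).
Proof.
move=> Hc Hr.
suff key a b : reach S a b -> b <> v ->
    (a <> v -> reach (remove S v) a b) /\
    (a = v -> forall a', S a' -> adj v a' -> reach (remove S v) a' b).
  by move=> a b [Sa av] [Sb bv]; apply: (key a b (Hc _ _ Sa Sb) bv).1.
elim=> [x Sx|x y z Sx Axy Hyz IH] bv; first by split=> // xv; apply: reach_refl.
have [IH1 IH2] := IH bv.
have Sy := reach_in_l Hyz.
split=> [xv|xv a' Sa' Ha'].
  have [yv|yv] := classic (y = v); last exact: reach_step (conj Sx xv) Axy (IH1 yv).
  by apply: (IH2 yv x Sx); rewrite -yv; apply: adj_sym.
have avy : adj v y by rewrite -xv.
apply: reach_trans (IH1 (adj_neq avy)).
have := Hr a' y (conj Sa' Ha') (conj Sy avy).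
by apply: reach_sub => t [St Ht]; split=> //; apply: adj_neq.
Qed.

Lemma remove_holefree (S : point -> Prop) v i : holefree S -> outer S (nb v i) ->
  holefree (remove S v).
Proof.
move=> Hf O x nx.
have [->|xv] := classic (x = v).
  by apply: (outer_adj (adj_nb v i)); [case|apply: outer_sub O => z []].
have nSx : ~ S x by move=> Sx; apply: nx.
by apply: outer_sub (Hf _ nSx) => z [].
Qed.

(* The three directions around [a1] and around [a2 <> a1] cover at least four
   consecutive directions, so they meet every run of three consecutive ones. *)
Definition dirs_overlap (i a1 a2 : nat) : bool :=
  (a1 == a2) || has (fun j => let x := ((i + j) %% 6)%N in
     [|| x == a1, x == ((a1 + 1) %% 6)%N, x == ((a1 + 5) %% 6)%N,
         x == a2, x == ((a2 + 1) %% 6)%N | x == ((a2 + 5) %% 6)%N]) (iota 0 3).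

Lemma dirs_overlapP (i a1 a2 : nat) : (i < 6)%N -> (a1 < 6)%N -> (a2 < 6)%N -> dirs_overlap i a1 a2.
Proof.
have all_ok : all (fun i => all (fun a1 => all (fun a2 => dirs_overlap i a1 a2)
  (iota 0 6)) (iota 0 6)) (iota 0 6) by [].
move=> hi h1 h2; move: all_ok.
move/allP/(_ i); rewrite mem_iota hi => /(_ isT).
move/allP/(_ a1); rewrite mem_iota h1 => /(_ isT).
by move/allP/(_ a2); rewrite mem_iota h2 => /(_ isT).
Qed.

Lemma SCE_one_interior (S : point -> Prop) v a1 a2 : SCE S v ->
  S (nb v a1) -> (forall j, S (nb (nb v a1) j)) ->
  S (nb v a2) -> (forall j, S (nb (nb v a2) j)) -> nb v a1 = nb v a2.
Proof.
move=> [_ [i [k [[Hk Hnot _] Hpos]]]] s1 I1 s2 I2.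
have k3 : (2 < k)%N by move: Hpos; lia.
have e x c : nb v (x + c) = nb v ((x %% 6 + c) %% 6) by rewrite modnDml nb_mod.
have nj j : (j < 3)%N -> ~ S (nb v ((i %% 6 + j) %% 6)).
  by move=> hj; rewrite -e; apply: Hnot; rewrite (leq_trans hj k3).
have s1p := I1 (a1 + 2)%N; rewrite nb_turn_cw e in s1p.
have s1m := I1 (a1 + 4)%N; rewrite nb_turn_ccw e in s1m.
have s2p := I2 (a2 + 2)%N; rewrite nb_turn_cw e in s2p.
have s2m := I2 (a2 + 4)%N; rewrite nb_turn_ccw e in s2m.
rewrite -(nb_mod v a1) in s1 *; rewrite -(nb_mod v a2) in s2 *.
case/orP: (dirs_overlapP (ltn_mod i 6) (ltn_mod a1 6) (ltn_mod a2 6)) => [/eqP->//|/hasP [j]].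
rewrite mem_iota add0n => /andP[_ /nj nS].
by case/or4P => [/eqP E|/eqP E|/eqP E|/or3P [/eqP E|/eqP E|/eqP E]]; rewrite E in nS.
Qed.

(** * The invariant of DLE *)

Section Invariant.
Variables (P : finType) (pos : P -> point).
Local Notation Sh := (shape_of pos).

(* By [inv_free], every boundary point of [S_e] carries the head of a candidate. *)
Record dle_inv (C : config P) : Prop := DleInv {
  inv_area : forall x, cSe C x -> area Sh x;
  inv_connected : connected_pts (cSe C);
  inv_holefree : holefree (cSe C);
  inv_head : forall p, cstatus C p <> Follower -> cSe C (chead C p);
  inv_tail : forall p, ctail C p <> chead C p -> ~ cSe C (ctail C p) /\ cstatus C p = Undecided;
  inv_disjoint : forall p q x, p <> q -> occ C p x -> occ C q x -> False;
  inv_free : forall x, cSe C x -> (exists p, chead C p = x /\ cstatus C p <> Follower) \/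
                                  (~ occupied C x /\ forall i, cSe C (nb x i));
  inv_elig : forall p, cstatus C p = Undecided ->
               forall i : 'I_6, celig C p i <-> cSe C (nb (chead C p) i);
  inv_leader : forall p, cstatus C p = Leader -> forall q, q <> p -> cstatus C q = Follower;
  inv_final : forall p, cfinal C p -> cstatus C p <> Undecided;
  inv_nonempty : exists x, cSe C x }.

Lemma upd_same T (f : P -> T) x y : upd f x y x = y.
Proof. by rewrite /upd eqxx. Qed.

Lemma upd_other T (f : P -> T) x y z : z <> x -> upd f x y z = f z.
Proof. by move=> /eqP H; rewrite /upd (negbTE H). Qed.

Lemma init_inv : permitted pos -> dle_inv (init_config pos).
Proof.
case=> HP Hinj Hconn; constructor=> //=.
- exact: area_connected.
- exact: area_holefree.
- by move=> p _; apply: shape_sub_area; exists p.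
- by move=> p q x pq [<-|<-] [E|E]; apply: pq; apply: Hinj.
- move=> x Ax; have [[p <-]|nS] := classic (Sh x); first by left; exists p.
  by right; split; [case=> q [E|E]; apply: nS; exists q|exact: area_interior].
- by case/card_gt0P: HP => p _; exists (pos p); apply: shape_sub_area; exists p.
Qed.

Section Steps.
Variables (C : config P) (p : P).
Hypothesis I : dle_inv C.

Lemma head_neq q : q <> p -> chead C q <> chead C p.
Proof. by move=> qp E; apply: (inv_disjoint I qp (x := chead C q)); [left|left; rewrite E]. Qed.

Lemma dle_inv_contract : chead C p <> ctail C p ->
  dle_inv (Config (upd (ctail C) p (chead C p)) (chead C) (cstatus C) (celig C) (cfinal C) (cSe C)).
Proof.
case: I => Harea Hconn Hhf Hhead Htail Hdisj Hfree Helig Hlead Hfin Hne Hexp.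
set C' := Config _ _ _ _ _ _.
have occ' q x : occ C' q x -> occ C q x.
  rewrite /occ /=; have [->|qp] := classic (q = p); last by rewrite upd_other.
  by rewrite upd_same => -[]; left.
constructor=> //=.
- move=> q; have [->|qp] := classic (q = p); first by rewrite upd_same.
  by rewrite upd_other //; apply: Htail.
- by move=> q r x qr /occ' h1 /occ' h2; apply: Hdisj h1 h2.
- move=> x /Hfree [H|[no H]]; [left|right] => //; split=> //.
  by move=> [q /occ' h]; apply: no; exists q.
Qed.

Lemma dle_inv_terminate : cstatus C p <> Undecided ->
  dle_inv (Config (ctail C) (chead C) (cstatus C) (celig C) (upd (cfinal C) p true) (cSe C)).
Proof.
case: I => Harea Hconn Hhf Hhead Htail Hdisj Hfree Helig Hlead Hfin Hne Hst.
constructor=> //= q.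
by have [->//|qp] := classic (q = p); rewrite upd_other //; apply: Hfin.
Qed.

Lemma Se_singleton v : cSe C v -> (forall i, ~ cSe C (nb v i)) -> forall x, cSe C x -> x = v.
Proof.
move=> Sv Hn x Sx; case: (reach_first (inv_connected I Sv Sx)) => [->//|[y [[i ->] Sy _]]].
by case: (Hn i).
Qed.

Lemma dle_inv_leader : cstatus C p = Undecided -> ctail C p = chead C p ->
  (forall i, ~ celig C p i) ->
  dle_inv (Config (ctail C) (chead C) (upd (cstatus C) p Leader) (celig C) (cfinal C) (cSe C)).
Proof.
case: (I) => Harea Hconn Hhf Hhead Htail Hdisj Hfree Helig Hlead Hfin Hne Hu Hc Hnf.
have Sv : cSe C (chead C p) by apply: Hhead; rewrite Hu.
have Hn i : ~ cSe C (nb (chead C p) i).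
  by case: (nb_ord (chead C p) i) => j ->; move/(Helig p Hu j); apply: Hnf.
have others q : q <> p -> cstatus C q = Follower.
  move=> qp; apply: NNPP => /Hhead Sq.
  exact: head_neq qp (Se_singleton Sv Hn Sq).
constructor=> //=.
- move=> q; have [->|qp] := classic (q = p); first by rewrite upd_same.
  by rewrite upd_other //; apply: Hhead.
- move=> q; have [->|qp] := classic (q = p); first by rewrite Hc.
  by rewrite upd_other //; apply: Htail.
- move=> x /Hfree [[r [Hr Hs]]|H]; [left|by right].
  by exists r; split=> //; have [->|rp] := classic (r = p); rewrite ?upd_same ?upd_other.
- move=> q; have [->|qp] := classic (q = p); first by rewrite upd_same.
  by rewrite upd_other //; apply: Helig.
- move=> q; have [-> _ r rp|qp] := classic (q = p); first by rewrite upd_other //; apply: others.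
  by rewrite upd_other // => /Hlead /(_ p (nesym qp)); rewrite Hu.
- move=> q; have [->|qp] := classic (q = p); first by rewrite upd_same.
  by rewrite upd_other //; apply: Hfin.
Qed.

Definition eroded_elig (v : point) : P -> 'I_6 -> Prop :=
  fun q i => celig C q i /\ nb (chead C q) i <> v.

Lemma no_leader_of_undecided : cstatus C p = Undecided -> forall q, cstatus C q <> Leader.
Proof.
move=> Hu q Hq; have [E|qp] := classic (q = p); first by rewrite -E Hq in Hu.
by move: (inv_leader I Hq (nesym qp)); rewrite Hu.
Qed.

Lemma interior_of_free x : cSe C x -> ~ occupied C x -> forall i, cSe C (nb x i).
Proof. by move=> Sx no; case: (inv_free I Sx) => [[q [Hq _]]|[]] //; case: no; exists q; left. Qed.

Lemma occ_upd_head (C' : config P) u q x : ctail C' = ctail C -> chead C' = upd (chead C) p u ->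
  occ C' q x -> (q = p /\ (x = u \/ x = ctail C p)) \/ (q <> p /\ occ C q x).
Proof.
rewrite /occ => -> ->; have [->|qp] := classic (q = p); last by rewrite upd_other // => H; right.
by rewrite upd_same => H; left; split=> //; case: H => <-; [left|right].
Qed.

Section Erosion.
Local Notation v := (chead C p).
Hypotheses (Hu : cstatus C p = Undecided) (HS : SCE (cSe C) v).

Lemma erode_connected : connected_pts (remove (cSe C) v).
Proof. by case: HS => -[_ Hred _] _; apply: remove_connected (inv_connected I) Hred. Qed.

Lemma erode_holefree : holefree (remove (cSe C) v).
Proof. by case: HS => -[_ _ [_ [j Oj]]] _; apply: remove_holefree (inv_holefree I) Oj. Qed.

Lemma erode_head q : q <> p -> cstatus C q <> Follower -> remove (cSe C) v (chead C q).
Proof. by move=> qp /(inv_head I) Sq; split=> //; apply: head_neq. Qed.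

Lemma erode_elig q : cstatus C q = Undecided ->
  forall i : 'I_6, eroded_elig v q i <-> remove (cSe C) v (nb (chead C q) i).
Proof. by move=> Hq i; rewrite /eroded_elig (inv_elig I Hq i). Qed.

Lemma erode_free x : remove (cSe C) v x ->
  (exists q, [/\ chead C q = x, cstatus C q <> Follower & q <> p]) \/
  (~ occupied C x /\ forall i, cSe C (nb x i)).
Proof.
case=> Sx xv; case: (inv_free I Sx) => [[q [Hq Hs]]|H]; [left|by right].
by exists q; split=> // qp; apply: xv; rewrite -Hq qp.
Qed.

Lemma erode_free_nb (i : 'I_6) x : cSe C (nb v i) -> ~ occupied C (nb v i) ->
  cSe C x -> (forall j, cSe C (nb x j)) -> x <> nb v i -> forall j, nb x j <> v.
Proof.
move=> Su nou Sx intx xu j /nb_opp_eq E; apply: xu; rewrite E.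
by apply: (SCE_one_interior HS); rewrite -?E //; apply: interior_of_free.
Qed.

Lemma dle_inv_erode_move (i : 'I_6) : ctail C p = chead C p ->
  let u := nb v i in remove (cSe C) v u -> ~ occupied C u ->
  dle_inv (Config (ctail C) (upd (chead C) p u) (cstatus C)
                  (upd (eroded_elig v) p (fun j : 'I_6 => (j : nat) <> ((i + 3) %% 6)%N))
                  (cfinal C) (remove (cSe C) v)).
Proof.
move=> Hc u [Su uv] nou.
have intu := interior_of_free Su nou.
set C' := Config _ _ _ _ _ _.
have occ' q x : occ C' q x -> (q = p /\ (x = u \/ x = v)) \/ (q <> p /\ occ C q x).
  by move/(@occ_upd_head C' u q x erefl erefl); rewrite Hc.
constructor=> //=.
- by move=> x [/(inv_area I)].
- exact: erode_connected.
- exact: erode_holefree.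
- move=> q; have [->|qp] := classic (q = p); first by rewrite upd_same.
  by rewrite upd_other //; apply: erode_head.
- move=> q; have [->|qp] := classic (q = p); first by rewrite upd_same Hc => _; split; [case|].
  by rewrite upd_other // => /(inv_tail I) [h1 h2]; split=> // -[].
- move=> q r x qr Hq Hr.
  case: (occ' _ _ Hq) => [[Eq Ex]|[qp Hq']]; case: (occ' _ _ Hr) => [[Er Ex']|[rp Hr']].
  + by apply: qr; rewrite Eq Er.
  + case: Ex => Ex; rewrite Ex in Hr'; first by apply: nou; exists r.
    exact: (inv_disjoint I (nesym rp) (or_introl erefl) Hr').
  + case: Ex' => Ex'; rewrite Ex' in Hq'; first by apply: nou; exists q.
    exact: (inv_disjoint I qp Hq' (or_introl erefl)).
  + exact: (inv_disjoint I qr) Hq' Hr'.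
- move=> x Hx; case: (erode_free Hx) => [[q [Hq Hs qp]]|[nox intx]].
    by left; exists q; rewrite upd_other.
  have [->|xu] := classic (x = u); first by left; exists p; rewrite upd_same Hu.
  right; split; last by move=> j; split; [apply: intx|apply: (erode_free_nb Su nou Hx.1 intx xu)].
  by case=> q /occ' [[_ [E|E]]|[_ Hq]]; [apply: xu|apply: Hx.2|apply: nox; exists q].
- move=> q Hq j; have [Eq|qp] := classic (q = p); last by rewrite !upd_other //; apply: erode_elig.
  subst q; rewrite !upd_same; split=> [hj|[_ hne] hj]; last by apply/hne; rewrite hj nb_mod nb_opp.
  split; first exact: intu.
  move=> E; apply: hj; have := nb_inj (etrans E (esym (nb_opp v i))).
  by rewrite (modn_small (ltn_ord j)).
- by move=> q /(no_leader_of_undecided Hu).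
- exact: (inv_final I).
- by exists u.
Qed.
Lemma dle_inv_erode_follow : ctail C p = chead C p -> (exists i, celig C p i) ->
  (forall i : 'I_6, ~ (remove (cSe C) v (nb v i) /\ ~ occupied C (nb v i))) ->
  dle_inv (Config (ctail C) (chead C) (upd (cstatus C) p Follower) (eroded_elig v)
                  (cfinal C) (remove (cSe C) v)).
Proof.
move=> Hc [i0 Hi0] Hno.
constructor=> //=.
- by move=> x [/(inv_area I)].
- exact: erode_connected.
- exact: erode_holefree.
- move=> q; have [->|qp] := classic (q = p); first by rewrite upd_same.
  by rewrite upd_other //; apply: erode_head.
- move=> q; have [->|qp] := classic (q = p); first by rewrite Hc.
  by rewrite upd_other // => /(inv_tail I) [h1 h2]; split=> // -[].
- exact: (inv_disjoint I).
- move=> x Hx; case: (erode_free Hx) => [[q [Hq Hs qp]]|[nox intx]].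
    by left; exists q; rewrite upd_other.
  right; split=> // j; split; first exact: intx.
  move=> /nb_opp_eq E; case: (nb_ord v (j + 3)) => k Ek.
  by apply: (Hno k); rewrite -Ek -E.
- move=> q; have [->|qp] := classic (q = p); first by rewrite upd_same.
  by rewrite upd_other // => Hq; apply: erode_elig.
- move=> q; have [->|qp] := classic (q = p); first by rewrite upd_same.
  by rewrite upd_other // => /(no_leader_of_undecided Hu).
- move=> q; have [->|qp] := classic (q = p); first by rewrite upd_same.
  by rewrite upd_other //; apply: (inv_final I).
- exists (nb v i0); split; [exact/(inv_elig I Hu i0)|exact: nb_neq].
Qed.

End Erosion.
End Steps.
End Invariant.

Local Close Scope ring_scope.

Section StepFacts.
Variables (P : finType) (pos : P -> point).
Local Notation dle_inv := (@dle_inv P pos).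

Ltac case_dle_step Hs :=
  case: Hs => [[Hf ->]|[[Hnf [Hne ->]]|[Hnf [Heq [[Ht ->]|[[Hnt [Hu [[Hall ->]|[[Hex [HS Her]]|
    [Hex [HnS ->]]]]]]|[Hnt [Hnu ->]]]]]]]].

Lemma dle_step_inv (C C' : config P) (p : P) : dle_inv C -> dle_step C p C' -> dle_inv C'.
Proof.
move=> I Hs; case_dle_step Hs => //.
- exact: dle_inv_contract.
- by apply: dle_inv_terminate => //; case: Ht.
- exact: dle_inv_leader.
- by case: Her => [[i [h1 h2 ->]]|[h ->]]; [apply: dle_inv_erode_move|apply: dle_inv_erode_follow].
Qed.

Lemma dle_step_Se_sub (C C' : config P) (p : P) x : dle_step C p C' -> cSe C' x -> cSe C x.
Proof. by move=> Hs; case_dle_step Hs => //; case: Her => [[i [h1 h2 ->]]|[h ->]] /= []. Qed.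

Lemma dle_step_other (C C' : config P) (p q : P) : dle_step C p C' -> q <> p ->
  [/\ chead C' q = chead C q, ctail C' q = ctail C q, cstatus C' q = cstatus C q
    & cfinal C' q = cfinal C q].
Proof.
move=> Hs qp; case_dle_step Hs => /=; rewrite ?upd_other //.
by case: Her => [[i [h1 h2 ->]]|[h ->]] /=; rewrite ?upd_other.
Qed.

Lemma dle_step_idle (C C' : config P) (p : P) : dle_inv C -> dle_step C p C' ->
  (forall x, cSe C' x <-> cSe C x) -> (forall q, cstatus C' q <> Leader) ->
  forall q, cstatus C' q = cstatus C q /\ chead C' q = chead C q.
Proof.
move=> I Hs Hx Hl q; have [->|qp] := classic (q = p); last by case: (dle_step_other Hs qp).
have Hs' := Hs; move: Hx Hl; case_dle_step Hs' => //= Hx Hl.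
- by case: (Hl p); rewrite /= upd_same.
- have Sv : cSe C (chead C p) by apply: (inv_head I); rewrite Hu.
  by move/Hx: Sv; case: Her => [[i [h1 h2 ->]]|[h ->]] /= [].
Qed.

Lemma dle_step_contracted (C C' : config P) (p q : P) : dle_step C p C' ->
  ctail C q = chead C q -> chead C' q = chead C q -> ctail C' q = chead C' q.
Proof.
move=> Hs Hc Hh; have [Eq|qp] := classic (q = p); last first.
  by case: (dle_step_other Hs qp) => h1 h2 _ _; rewrite h1 h2.
subst q; move: Hh; case_dle_step Hs => //=; rewrite ?upd_same //.
by case: Her => [[i [[_ H] h2 ->]]|[h ->]] //=; rewrite upd_same.
Qed.

Lemma dle_step_decided (C C' : config P) (p : P) : (forall q, cstatus C q <> Undecided) ->
  dle_step C p C' -> forall q, cstatus C' q = cstatus C q.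
Proof.
move=> Hd Hs q; have [Eq|qp] := classic (q = p); last by case: (dle_step_other Hs qp).
by subst q; case_dle_step Hs => //; case: (Hd p).
Qed.

Lemma dle_step_final (C C' : config P) (p : P) : dle_inv C -> ~~ cfinal C p ->
  (forall q, cstatus C q <> Undecided) -> dle_step C p C' -> cfinal C' p.
Proof.
move=> I Hnf0 Hd Hs.
have Hc : ctail C p = chead C p by apply: NNPP => /(inv_tail I) [_ /Hd].
have Ht0 : term_cond C p by split; [apply: Hd|move=> q _; apply: Hd].
by case_dle_step Hs => //=; first [rewrite upd_same | case: Hnt | rewrite Hf in Hnf0 | case: Hne].
Qed.

Lemma dle_step_expanded (C C' : config P) (p : P) : dle_inv C -> ctail C p <> chead C p ->
  dle_step C p C' -> ctail C' p = chead C' p /\ chead C' p = chead C p.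
Proof.
move=> I Hexp Hs; have [_ Hu0] := inv_tail I Hexp.
by case_dle_step Hs => //=; first [rewrite upd_same | case: (inv_final I Hf) | case: Hexp].
Qed.

Lemma dle_step_elect (C C' : config P) (p : P) : dle_inv C -> cstatus C p = Undecided ->
  ctail C p = chead C p -> (forall i, ~ cSe C (nb (chead C p) i)) ->
  dle_step C p C' -> cstatus C' p = Leader.
Proof.
move=> I Hu0 Hc Hn Hs.
have Hnf' (i : 'I_6) : ~ celig C p i by move/(inv_elig I Hu0); apply: Hn.
by case_dle_step Hs => //=; first [rewrite upd_same | case: (inv_final I Hf) | case: Hne
  | case: Ht | case: Hex => i /Hnf' | case: Hnu].
Qed.

Lemma dle_step_erode (C C' : config P) (p : P) : dle_inv C -> cstatus C p = Undecided ->
  ctail C p = chead C p -> SCE (cSe C) (chead C p) -> (exists i, cSe C (nb (chead C p) i)) ->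
  dle_step C p C' -> ~ cSe C' (chead C p).
Proof.
move=> I Hu0 Hc HS0 [i0 Hi0] Hs.
have [j Hj] : exists j : 'I_6, celig C p j.
  by case: (nb_ord (chead C p) i0) => j Ej; exists j; apply/(inv_elig I Hu0 j); rewrite -Ej.
by case_dle_step Hs => //=; first [case: (inv_final I Hf) | case: Hne | case: Ht
  | case: (Hall j Hj) | case: HnS | case: Hnu
  | case: Her => [[i [h1 h2 ->]]|[h ->]] /= [_ []]].
Qed.

End StepFacts.

(** * Liveness *)

Lemma candidate_exists (P : finType) (pos : P -> point) (C : config P) :
  dle_inv pos C -> (forall q, cstatus C q <> Leader) ->
  exists q, [/\ cstatus C q = Undecided, cSe C (chead C q) &
    (SCE (cSe C) (chead C q) /\ exists i, cSe C (nb (chead C q) i)) \/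
    (forall i, ~ cSe C (nb (chead C q) i))].
Proof.
move=> I NL.
have candidate w : cSe C w -> (exists i, ~ cSe C (nb w i)) ->
    exists q, chead C q = w /\ cstatus C q = Undecided.
  move=> Sw [i ni]; case: (inv_free I Sw) => [[q [h1 h2]]|[_ Hint]]; last by case: (ni (Hint i)).
  by exists q; split=> //; case E: (cstatus C q) => //; case: (NL q).
have [x0 Sx0] := inv_nonempty I.
have [[x [y [Sx Sy xy]]]|single] := classic (nontrivial (cSe C)).
  have Hcov : covered (cSe C) (box_points (shape_bound pos)) by move=> z /(inv_area I) /area_covered.
  have [w Hw] := exists_SCE Hcov (inv_holefree I) (ex_intro _ x (ex_intro _ y (And3 Sx Sy xy))).
  have [[[Sw Hbnd] _ _] _] := Hw.
  have [q [Ew Hq]] := candidate w Sw Hbnd; subst w.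
  exists q; split=> //; left; split=> //.
  have [z [Sz zw]] : exists z, cSe C z /\ z <> chead C q.
    by have [E|] := classic (x = chead C q); [exists y; rewrite -E; split=> // /esym|exists x].
  case: (reach_first (inv_connected I Sw Sz)) => [/esym//|[y' [[i ->] Sy' _]]].
  by exists i.
have Hx0 i : ~ cSe C (nb x0 i).
  by move=> Hi; apply: single; exists x0, (nb x0 i); split=> //; apply/nesym/nb_neq.
have [q [Eq Hq]] := candidate x0 Sx0 (ex_intro _ 0%N (Hx0 0%N)).
by exists q; rewrite Eq; split=> //; right.
Qed.

Definition decb (Q : Prop) : bool := if excluded_middle_informative Q then true else false.

Lemma decbP (Q : Prop) : decb Q <-> Q.
Proof. by rewrite /decb; case: excluded_middle_informative. Qed.

Lemma count_sub_lt (T : eqType) (a1 a2 : pred T) s x : subpred a1 a2 -> x \in s -> a2 x -> ~~ a1 x ->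
  (count a1 s < count a2 s)%N.
Proof.
move=> Hs; elim: s => [//|y s IH]; rewrite in_cons => /orP[/eqP->|Hx] H2 H1 /=.
  by rewrite H2 (negbTE H1) add1n add0n ltnS sub_count.
rewrite -addnS leq_add ?IH //; case E: (a1 y) => //=; by rewrite (Hs _ E).
Qed.

Lemma pred_ext (A B : point -> Prop) : (forall x, A x <-> B x) -> A = B.
Proof. by move=> H; apply: functional_extensionality => x; apply: propositional_extensionality. Qed.

Section Liveness.
Variables (P : finType) (pos : P -> point) (C : nat -> config P) (a : nat -> P).
Hypotheses (Hperm : permitted pos) (Hexec : execution pos C a) (Hfair : fair a).

Lemma exec_step t : dle_step (C t) (a t) (C t.+1).
Proof. by case: Hexec. Qed.

Lemma exec_inv t : dle_inv pos (C t).
Proof.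
elim: t => [|t IH]; first by case: Hexec => -> _; apply: init_inv.
exact: dle_step_inv IH (exec_step t).
Qed.

Lemma exec_Se_sub t d x : cSe (C (t + d)) x -> cSe (C t) x.
Proof. by elim: d => [|d IH]; rewrite ?addn0 // addnS => /(dle_step_Se_sub (exec_step _)) /IH. Qed.

Definition eligible_count t : nat :=
  count (fun x => decb (cSe (C t) x)) (box_points (shape_bound pos)).

Lemma eligible_count_le t d : (eligible_count (t + d) <= eligible_count t)%N.
Proof. by apply: sub_count => x /decbP /exec_Se_sub H; apply/decbP. Qed.

Lemma eligible_count_lt t x : cSe (C t) x -> ~ cSe (C t.+1) x ->
  (eligible_count t.+1 < eligible_count t)%N.
Proof.
move=> h1 h2; apply: (@count_sub_lt _ _ _ _ x).
- by move=> y /decbP /(dle_step_Se_sub (exec_step _)) H; apply/decbP.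
- exact/area_covered/(inv_area (exec_inv t)).
- exact/decbP.
- by apply/negP => /decbP.
Qed.

Definition idle_from t : Prop := forall s, (t <= s)%N ->
  (forall q, cstatus (C s) q <> Leader) /\ (forall x, cSe (C s.+1) x <-> cSe (C s) x).

Lemma idle_frozen t : idle_from t -> forall s, (t <= s)%N ->
  (forall q, cstatus (C s) q = cstatus (C t) q /\ chead (C s) q = chead (C t) q) /\
  cSe (C s) = cSe (C t).
Proof.
move=> H s /subnKC <-; elim: (s - t)%N => [|d [IH1 IH2]]; first by rewrite addn0.
have [_ He] := H (t + d)%N (leq_addr _ _).
have [NL _] := H (t + d.+1)%N (leq_addr _ _).
rewrite addnS in NL *; split; last by rewrite -IH2; apply: pred_ext.
move=> q; have [-> ->] := dle_step_idle (exec_inv _) (exec_step (t + d)) He NL q.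
exact: IH1.
Qed.

Lemma idle_activation t q : idle_from t ->
  exists t2, [/\ (t <= t2)%N, a t2 = q & ctail (C t2) q = chead (C t2) q].
Proof.
move=> H; case: (Hfair q t) => t1 [ht1 at1].
have [Hc1|Hc1] := classic (ctail (C t1) q = chead (C t1) q); first by exists t1.
have frozen_head s : (t <= s)%N -> chead (C s) q = chead (C t) q.
  by move=> hs; have [/(_ q) [_ ->] _] := idle_frozen H hs.
have contracted s : (t1 < s)%N -> ctail (C s) q = chead (C s) q.
  elim: s => // s IH; rewrite ltnS leq_eqVlt => /orP[/eqP <-|hs].
    by have := exec_step t1; rewrite at1 => /(dle_step_expanded (exec_inv t1) Hc1) [].
  apply: (dle_step_contracted (exec_step s) (IH hs)).
  by rewrite !frozen_head // (leq_trans ht1) // ltnW // ltnW.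
case: (Hfair q t1.+1) => t2 [ht2 at2]; exists t2; split=> //; last exact: contracted.
by rewrite (leq_trans ht1) // ltnW.
Qed.

Lemma not_idle t : ~ idle_from t.
Proof.
move=> H.
have [q [Hu Sw Hmode]] := candidate_exists (exec_inv t) (H t (leqnn t)).1.
have [t2 [ht2 at2 Hc2]] := idle_activation q H.
have [F1 F2] := idle_frozen H ht2.
have [_ E2] := H t2 ht2.
have Hst := exec_step t2; rewrite at2 in Hst.
rewrite -(F1 q).1 -(F1 q).2 -F2 in Hu Sw Hmode.
case: Hmode => [[HS Hi]|Hn].
  by apply: (dle_step_erode (exec_inv t2) Hu Hc2 HS Hi Hst); apply/E2.
have [NL3 _] := H t2.+1 (leqW ht2).
exact: NL3 q (dle_step_elect (exec_inv t2) Hu Hc2 Hn Hst).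
Qed.

Lemma eventually_leader : exists t l, cstatus (C t) l = Leader.
Proof.
apply: NNPP => Hno.
suff : forall n t, (eligible_count t < n)%N -> False by move/(_ _ 0%N (ltnSn _)).
elim=> [//|n IH] t Ht.
have [[t' [ht' [x [h1 h2]]]]|Hnone] :=
  classic (exists t', (t <= t')%N /\ exists x, cSe (C t') x /\ ~ cSe (C t'.+1) x).
  apply: (IH t'.+1); apply: leq_trans (eligible_count_lt h1 h2) _.
  by rewrite -ltnS (leq_trans _ Ht) // ltnS -(subnKC ht'); apply: eligible_count_le.
apply: (@not_idle t) => s hs; split=> [q Hq|x]; first by apply: Hno; exists s, q.
split; first exact: (dle_step_Se_sub (exec_step s)).
by move=> h1; apply: NNPP => h2; apply: Hnone; exists s; split=> //; exists x.
Qed.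

Lemma decided_stable t : (forall q, cstatus (C t) q <> Undecided) ->
  forall d q, cstatus (C (t + d)) q = cstatus (C t) q.
Proof.
move=> Hdec; elim=> [|d IH] q; first by rewrite addn0.
by rewrite addnS (dle_step_decided _ (exec_step _)) // => r; rewrite IH.
Qed.

Lemma eventually_final t p : (forall q, cstatus (C t) q <> Undecided) -> exists t', cfinal (C t') p.
Proof.
move=> Hdec; case: (Hfair p t) => t' [ht' at'].
have [Hf|Hf] := classic (cfinal (C t') p); first by exists t'.
exists t'.+1; have := exec_step t'; rewrite at'.
apply: (dle_step_final (exec_inv t')); first exact/negP.
by move=> r; rewrite -(subnKC ht') decided_stable.
Qed.

End Liveness.

Theorem theorem4p3 (P : finType) (pos : P -> point) :
  permitted pos ->
  forall (C : nat -> config P) (a : nat -> P),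
    execution pos C a -> fair a ->
    (forall p : P, exists t, cfinal (C t) p) /\
    (exists t, exists l : P, cstatus (C t) l = Leader /\
        forall q : P, q <> l -> cstatus (C t) q = Follower).
Proof.
move=> Hperm C a Hexec Hfair.
have [t [l Hl]] := eventually_leader Hperm Hexec Hfair.
have Hfol := inv_leader (exec_inv Hperm Hexec t) Hl.
have Hdec q : cstatus (C t) q <> Undecided by have [->|/Hfol ->] := classic (q = l); rewrite ?Hl.
split; last by exists t, l.
by move=> p; apply: (eventually_final Hperm Hexec Hfair p Hdec).
Qed.
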